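(* Let $G=(V,E)$ be a finite planar embedded graph with $V=\{1,\dots,n\}$, let $\mathbf{p}$ be a packing of $G$, and let $V=V^+\sqcup V^-\sqcup V^=\sqcup V^0$ be a partition of the vertices. Then $\mathbf{p}$ is infinitesimally rigid (with respect to this partition) if and only if both of the following hold: (1) (Fixed radius condition) Every infinitesimal flex $\mathbf{p}'$ of $\mathbf{p}$ with $r_k'=0$ for all $k\in V^+\cup V^-\cup V^=$ is trivial; (2) (Stress existence condition) There exists an equilibrium stress $\omega$ on $(G,\mathbf{p})$ whose radial force sum $\omega_i=\sum_{j:(i,j)\in E}\omega_{ij}(r_i+r_j)$ is strictly positive for every $i\in V^-$, strictly negative for every $i\in V^+$, and equal to $0$ for every $i\in V^0$.
   Context: A packing of a planar embedded graph $G=(V,E)$, $V=\{1,\dots,n\}$, is a vector $\mathbf{p}=(x_1,y_1,r_1,\dots,x_n,y_n,r_n)\in\mathbb{R}^{3n}$ with all $r_i>0$ such that for every edge $(i,j)\in E$, $(r_i+r_j)^2=(x_i-x_j)^2+(y_i-y_j)^2$ (circle $i$ of center $\mathbf{p}_i=(x_i,y_i)$ and radius $r_i$ is externally tangent to circle $j$), and around each vertex the neighbors appear in the same counterclockwise order as in the given planar embedding. Disks not joined by an edge may overlap. The vertex set is partitioned into $V^+$ (radii allowed to increase or stay), $V^-$ (allowed to decrease or stay), $V^=$ (fixed radii), $V^0$ (free). An infinitesimal flex is a vector $\mathbf{p}'=(x_1',y_1',r_1',\dots,x_n',y_n',r_n')$ with $(\mathbf{p}_i-\mathbf{p}_j)\cdot(\mathbf{p}_i'-\mathbf{p}_j')=(r_i+r_j)(r_i'+r_j')$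 for all $(i,j)\in E$, where $\mathbf{p}_i'=(x_i',y_i')$. It is proper if $r_i'\ge 0$ for $i\in V^+$, $r_i'\le 0$ for $i\in V^-$, $r_i'=0$ for $i\in V^=$. It is trivial if it is the derivative at $t=0$ of a smooth family of congruent motions (rotations and translations of the plane applied to all centers, radii unchanged). The packing is infinitesimally rigid if every proper infinitesimal flex is trivial. A stress is a function $\omega:E\to\mathbb{R}$, $\omega_{ij}=\omega_{ji}$; it is an equilibrium stress if $\sum_{j:(i,j)\in E}\omega_{ij}(\mathbf{p}_i-\mathbf{p}_j)=0$ for every vertex $i$. *)

From HB Require Import structures.
From mathcomp Require Import all_boot all_order all_algebra.
From mathcomp Require Import all_classical all_reals all_analysis.
Set Implicit Arguments. Unset Strict Implicit. Unset Printing Implicit Defensive.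
Import Order.TTheory GRing.Theory Num.Theory.
Local Open Scope ring_scope.

(* Planar embedded graphs on V = 'I_n (vertices 0..n-1 stand for 1..n).   *)
(* A graph is a simple graph [adj] (symmetric, irreflexive); an embedding *)
(* is a rotation system [rot]: rot i lists the neighbours of i, without   *)
(* repetition, in counterclockwise order (cyclically).                    *)
Record emb_graph (n : nat) := EmbGraph {
  adj : rel 'I_n;
  rot : 'I_n -> seq 'I_n
}.

Definition dart n (G : emb_graph n) (d : 'I_n * 'I_n) : bool := adj G d.1 d.2.

(* face permutation on darts: (i,j) |-> (j, successor of i around j) *)
Definition face_step n (G : emb_graph n) (d : 'I_n * 'I_n) : 'I_n * 'I_n :=
  if dart G d then (d.2, next (rot G d.2) d.1) else d.

Definition num_faces n (G : emb_graph n) : nat :=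
  #|[set d | dart G d & froot (face_step G) d == d]|.

Definition num_darts n (G : emb_graph n) : nat := #|[set d | dart G d]|.

Definition num_comps n (G : emb_graph n) : nat :=
  #|[set i : 'I_n | fingraph.root (adj G) i == i]|.

Definition num_comps_with_edges n (G : emb_graph n) : nat :=
  #|[set i : 'I_n | (fingraph.root (adj G) i == i) &&
                    [exists j, exists k, (fingraph.root (adj G) j == i) && adj G j k]]|.

Definition is_emb_graph n (G : emb_graph n) : Prop :=
  (forall i j, adj G i j = adj G j i) /\
  (forall i, ~~ adj G i i) /\
  (forall i, uniq (rot G i)) /\
  (forall i j, (j \in rot G i) = adj G i j).

(* The rotation system is planar (genus 0 on every component): Euler's      *)
(* formula V - E + F = 2 for each component having an edge, and 1 for an    *)
(* isolated vertex; summed: 2V - 2E + 2F = 2(c + c_e), where 2E = #darts.   *)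
Definition planar_emb_graph n (G : emb_graph n) : Prop :=
  is_emb_graph G /\
  (n.*2 + (num_faces G).*2 = num_darts G + (num_comps G + num_comps_with_edges G).*2)%N.

Section Packing.
Variable R : realType.

Record config (n : nat) := Config { px : 'I_n -> R; py : 'I_n -> R; pr : 'I_n -> R }.

Definition ccw_ordered n (x y : 'I_n -> R) (x0 y0 : R) (s : seq 'I_n) : Prop :=
  exists theta : nat -> R,
    (forall k, (k.+1 < size s)%N -> theta k < theta k.+1) /\
    ((0 < size s)%N -> theta (size s).-1 < theta 0%N + 2 * pi) /\
    (forall k j, (k < size s)%N -> nth None (map Some s) k = Some j ->
       let dx := x j - x0 in let dy := y j - y0 in
       dx = Num.sqrt (dx ^+ 2 + dy ^+ 2) * cos (theta k) /\
       dy = Num.sqrt (dx ^+ 2 + dy ^+ 2) * sin (theta k)).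

Definition is_packing n (G : emb_graph n) (p : config n) : Prop :=
  (forall i, 0 < pr p i) /\
  (forall i j, adj G i j ->
     (pr p i + pr p j) ^+ 2 = (px p i - px p j) ^+ 2 + (py p i - py p j) ^+ 2) /\
  (forall i, ccw_ordered (px p) (py p) (px p i) (py p i) (rot G i)).

(* vertex classes V^+, V^-, V^=, V^0 *)
Inductive vkind := VPlus | VMinus | VEq | VFree.

Definition inf_flex n (G : emb_graph n) (p q : config n) : Prop :=
  forall i j, adj G i j ->
    (px p i - px p j) * (px q i - px q j) + (py p i - py p j) * (py q i - py q j)
    = (pr p i + pr p j) * (pr q i + pr q j).

Definition proper_flex n (kind : 'I_n -> vkind) (q : config n) : Prop :=
  forall i, match kind i return Prop with
            | VPlus => 0 <= pr q i
            | VMinus => pr q i <= 0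
            | VEq => pr q i = 0
            | VFree => True
            end.

Definition smooth (f : R -> R) : Prop :=
  forall (k : nat) (t : R), derivable (derive1n k f) t 1.

(* q is the derivative at t = 0 of a smooth family of congruent motions      *)
(* (rotation by theta t followed by translation by (a t, b t)), equal to the *)
(* identity at t = 0, applied to all centers, radii unchanged.              *)
Definition trivial_flex n (p q : config n) : Prop :=
  exists theta a b : R -> R,
    [/\ smooth theta, smooth a, smooth b & theta 0 = 0 /\ a 0 = 0 /\ b 0 = 0] /\
    forall i,
      [/\ px q i = derive1 (fun t => cos (theta t) * px p i - sin (theta t) * py p i + a t) 0,
          py q i = derive1 (fun t => sin (theta t) * px p i + cos (theta t) * py p i + b t) 0
        & pr q i = 0].

Definition inf_rigid n (G : emb_graph n) (kind : 'I_n -> vkind) (p : config n) : Prop :=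
  forall q, inf_flex G p q -> proper_flex kind q -> trivial_flex p q.

(* stresses: functions on edges, encoded as symmetric functions on pairs     *)
(* (values on non-edges are irrelevant).                                    *)
Definition is_stress n (G : emb_graph n) (w : 'I_n -> 'I_n -> R) : Prop :=
  forall i j, adj G i j -> w i j = w j i.

Definition equilibrium_stress n (G : emb_graph n) (p : config n) (w : 'I_n -> 'I_n -> R) : Prop :=
  is_stress G w /\
  forall i, \sum_(j | adj G i j) w i j * (px p i - px p j) = 0 /\
            \sum_(j | adj G i j) w i j * (py p i - py p j) = 0.

Definition radial_force n (G : emb_graph n) (p : config n) (w : 'I_n -> 'I_n -> R) (i : 'I_n) : R :=
  \sum_(j | adj G i j) w i j * (pr p i + pr p j).

End Packing.

From HB Require Import structures.
From mathcomp Require Import all_boot all_order all_algebra.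
From mathcomp Require Import all_classical all_reals all_analysis.
From mathcomp Require Import ring lra.
Import Order.TTheory GRing.Theory Num.Theory.
Local Open Scope ring_scope.
Set Implicit Arguments. Unset Strict Implicit.

(* If [w] is an equilibrium stress and [q] an infinitesimal flex, summing
   [w_ij] times the flex equation of every edge gives [sum_i w_i r'_i = 0]:
   the center terms cancel by equilibrium and only the radial forces [w_i]
   remain.  Under the sign conditions each term [w_i r'_i] of a proper flex
   is [<= 0], so all vanish, the radii of the non-free vertices are fixed,
   and the fixed radius condition makes the flex trivial.  Conversely,
   rigidity says that the linear system (edge equations, [r'_k = 0] on
   [V^=], [+-r'_k >= 0] on [V^+-]) forces [r'_k = 0] on [V^+-]; by Farkas'
   lemma some combination of the equations plus a strictly positive
   combination of the sign constraints vanishes identically, and its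
   coefficients are an equilibrium stress with the required radial forces. *)

Section Farkas.
Variables (R : realFieldType) (V : lmodType R).
Implicit Types (c : V -> R) (x y : V).

Lemma scalarN {f : V -> R} : scalar f -> forall x, f (- x) = - f x.
Proof. by move=> lf x; rewrite -scaleN1r (scalable_linear lf) /= mulN1r. Qed.

Lemma scalar_subZ {f : V -> R} : scalar f -> forall x y t, f (x - t *: y) = f x - t * f y.
Proof. by move=> lf x y t; rewrite (zmod_morphism_linear lf) (scalable_linear lf). Qed.

(* Eliminate one inequality [a i0 >= 0]: if some [x0] satisfies the others
   but [c x0 < 0], then [a i0 x0 < 0], and projecting along [x0] onto the
   kernel of [a i0] gives an instance with one inequality less. *)
Lemma farkas_set {I : finType} {a : I -> V -> R} {c} (A : {set I}) :
  (forall i, scalar (a i)) -> scalar c ->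
  (forall x, (forall i, i \in A -> 0 <= a i x) -> 0 <= c x) ->
  exists2 l : I -> R, forall i, 0 <= l i & forall x, c x = \sum_(i in A) l i * a i x.
Proof.
have [m] := ubnP #|A|; elim: m A a c => // m IH A a c ltAm la lc cone.
have [A0 | [i0 Ai0]] := set_0Vmem A.
  exists (fun _ => 0) => // x; rewrite A0 big_set0.
  have noA y i : i \in A -> 0 <= a i y by rewrite A0 inE.
  have := cone x (noA x); have := cone (- x) (noA (- x)).
  by rewrite (scalarN lc); lra.
set A' := A :\ i0.
have ltA'm : (#|A'| < m)%N by move: ltAm; rewrite (cardsD1 i0 A) Ai0.
have sumA (l : I -> R) x :
    \sum_(i in A) l i * a i x = l i0 * a i0 x + \sum_(i in A') l i * a i x.
  by rewrite (big_setD1 i0).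
have [cone' | /boolp.existsNP[x0 /boolp.not_implyP[ax0 /negP cx0]]] :=
  boolp.pselect (forall x, (forall i, i \in A' -> 0 <= a i x) -> 0 <= c x).
  have [l l0 cE] := IH _ a c ltA'm la lc cone'.
  exists (fun i => if i == i0 then 0 else l i) => [i|x]; first by case: eqP.
  rewrite sumA eqxx mul0r add0r cE.
  by apply: eq_bigr => i; rewrite in_setD1 => /andP[/negPf ->].
rewrite -ltNge in cx0; set d := a i0 x0.
have d_lt0 : d < 0.
  rewrite ltNge; apply/negP => d_ge0; move: cx0; rewrite ltNge cone // => i Ai.
  by case: (eqVneq i i0) => [-> //|ne]; apply: ax0; rewrite in_setD1 ne.
pose a' i x := a i x - a i x0 / d * a i0 x.
pose c' x := c x - c x0 / d * a i0 x.
have la' i : scalar (a' i) by move=> t x y; rewrite /a' !la; ring.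
have lc' : scalar c' by move=> t x y; rewrite /c' lc la; ring.
have cone' x : (forall i, i \in A' -> 0 <= a' i x) -> 0 <= c' x.
  move=> a'x; pose y := x - (a i0 x / d) *: x0.
  have ay i : a i y = a' i x by rewrite (scalar_subZ (la i)) /a'; ring.
  have ay0 : a i0 y = 0 by rewrite ay /a' -/d divff ?mul1r ?subrr ?ltr0_neq0.
  have -> : c' x = c y by rewrite (scalar_subZ lc) /c'; ring.
  apply: cone => i Ai; case: (eqVneq i i0) => [->|ne]; first by rewrite ay0.
  by rewrite ay a'x // in_setD1 ne.
have [mu mu0 c'E] := IH _ a' c' ltA'm la' lc' cone'.
set S := \sum_(i in A') mu i * a i x0.
have S_ge0 : 0 <= S by apply: sumr_ge0 => i A'i; rewrite mulr_ge0 ?ax0.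
exists (fun i => if i == i0 then (c x0 - S) / d else mu i) => [i|x].
  by case: eqP => // _; rewrite ler_ndivlMr // mul0r; lra.
rewrite sumA eqxx (eq_bigr (fun i => mu i * a i x)); last first.
  by move=> i; rewrite in_setD1 => /andP[/negPf ->].
have c'xE : c' x = \sum_(i in A') mu i * a i x - S / d * a i0 x.
  rewrite c'E /S mulr_suml mulr_suml -sumrB.
  by apply: eq_bigr => i _; rewrite /a'; ring.
have -> : c x = c' x + c x0 / d * a i0 x by rewrite /c'; ring.
rewrite c'xE; ring.
Qed.

Lemma farkas {J I : finType} {g : J -> V -> R} {a : I -> V -> R} {c} :
  (forall j, scalar (g j)) -> (forall i, scalar (a i)) -> scalar c ->
  (forall x, (forall j, g j x = 0) -> (forall i, 0 <= a i x) -> 0 <= c x) ->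
  exists mu : J -> R, exists2 l : I -> R, forall i, 0 <= l i &
    forall x, c x = \sum_j mu j * g j x + \sum_i l i * a i x.
Proof.
move=> lg la lc cone.
pose b (k : (J * bool) + I) x :=
  match k with inl (j, s) => if s then g j x else - g j x | inr i => a i x end.
have lb k : scalar (b k) by case: k => [[j []]|i] t x y /=; rewrite ?lg ?la //; ring.
have [x bx|l l0 cE] := farkas_set (A := [set: _]) lb lc.
  apply: cone => [j|i]; last exact: (bx (inr i) (finset.in_setT _)).
  have := bx (inl (j, true)) (finset.in_setT _).
  by have := bx (inl (j, false)) (finset.in_setT _) => /=; lra.
exists (fun j => l (inl (j, true)) - l (inl (j, false))), (l \o inr) => [i|x].
  exact: l0.
rewrite cE (eq_bigl _ _ (@finset.in_setT _)) big_sumType /=; congr (_ + _).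
rewrite (eq_bigr (fun js => l (inl (js.1, js.2)) * b (inl (js.1, js.2)) x)); last by case.
rewrite -(pair_bigA _ (fun j s => l (inl (j, s)) * b (inl (j, s)) x)).
by apply: eq_bigr => j _; rewrite big_bool /=; ring.
Qed.

Lemma farkas_strict {J I : finType} {g : J -> V -> R} {a : I -> V -> R} :
  (forall j, scalar (g j)) -> (forall i, scalar (a i)) ->
  (forall x, (forall j, g j x = 0) -> (forall i, 0 <= a i x) -> forall i, a i x = 0) ->
  exists mu : J -> R, exists2 l : I -> R, forall i, 0 < l i &
    forall x, \sum_j mu j * g j x + \sum_i l i * a i x = 0.
Proof.
move=> lg la cone.
(* Represent every [- a k] by [farkas] and add up: then each [a i] carries a
   coefficient at least [1]. *)
have rep k : exists2 ml : (J -> R) * (I -> R), forall i, 0 <= ml.2 i &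
    forall x, - a k x = \sum_j ml.1 j * g j x + \sum_i ml.2 i * a i x.
  have lc : scalar (fun x => - a k x) by move=> t x y; rewrite la; ring.
  have [|mu [l l0 E]] := farkas lg la lc.
    by move=> x gx ax; rewrite (cone x gx ax) oppr0.
  by exists (mu, l).
have [ml ml0 mlE] := fin_all_exists2 rep.
exists (fun j => \sum_k (ml k).1 j), (fun i => 1 + \sum_k (ml k).2 i) => [i|x].
  by rewrite ltr_pwDl ?sumr_ge0.
have -> : \sum_j (\sum_k (ml k).1 j) * g j x = \sum_k \sum_j (ml k).1 j * g j x.
  by rewrite exchange_big; apply: eq_bigr => j _; rewrite mulr_suml.
have -> : \sum_i (1 + \sum_k (ml k).2 i) * a i x
    = \sum_i a i x + \sum_k \sum_i (ml k).2 i * a i x.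
  by rewrite exchange_big -big_split; apply: eq_bigr => i _; rewrite mulrDl mul1r mulr_suml.
rewrite addrCA -big_split /= (eq_bigr _ (fun k _ => esym (mlE k x))) sumrN.
exact: subrr.
Qed.
End Farkas.

Lemma mx3_form_eq0 (R : pzRingType) n (a b c : 'I_n -> R) :
  (forall Q : 'M[R]_(3, n), \sum_i (a i * Q 0 i + b i * Q 1 i + c i * Q 2 i) = 0) ->
  forall i, [/\ a i = 0, b i = 0 & c i = 0].
Proof.
move=> form0 i.
have coef (r : 'I_3) : a i * (r == 0)%:R + b i * (r == 1)%:R + c i * (r == 2)%:R = 0.
  rewrite -(form0 (delta_mx r i)) (bigD1 i) //= big1 ?addr0 => [|j /negPf ji].
    by rewrite !mxE !eqxx !andbT ![(_ == r)]eq_sym.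
  by rewrite !mxE ji !andbF !mulr0 !addr0.
by split; [have := coef 0 | have := coef 1 | have := coef 2];
  rewrite /= ?mulr1 ?mulr0 ?addr0 ?add0r.
Qed.

Section EdgeSums.
Variables (R : comPzRingType) (n : nat) (adj : rel 'I_n).
Hypothesis adjC : symmetric adj.

Lemma sum_adj_swap (F : 'I_n -> 'I_n -> R) :
  \sum_i \sum_(j | adj i j) F i j = \sum_i \sum_(j | adj i j) F j i.
Proof.
under eq_bigr do rewrite big_mkcond; rewrite exchange_big.
by apply: eq_bigr => i _; rewrite [RHS]big_mkcond; apply: eq_bigr => j _; rewrite adjC.
Qed.

Lemma sum_adj_double (F : 'I_n -> 'I_n -> R) (v : 'I_n -> R) (s : R) :
  s * s = 1 -> (forall i j, adj i j -> F j i = s * F i j) ->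
  \sum_i \sum_(j | adj i j) F i j * (v i + s * v j)
  = 2 * \sum_i (\sum_(j | adj i j) F i j) * v i.
Proof.
move=> ss1 FC.
have -> : \sum_i \sum_(j | adj i j) F i j * (v i + s * v j)
    = \sum_i \sum_(j | adj i j) F i j * v i + s * \sum_i \sum_(j | adj i j) F i j * v j.
  rewrite mulr_sumr -big_split; apply: eq_bigr => i _.
  by rewrite mulr_sumr -big_split; apply: eq_bigr => j _ /=; ring.
rewrite [X in _ + s * X]sum_adj_swap.
have -> : \sum_i \sum_(j | adj i j) F j i * v i = s * \sum_i \sum_(j | adj i j) F i j * v i.
  rewrite mulr_sumr; apply: eq_bigr => i _.
  by rewrite mulr_sumr; apply: eq_bigr => j ij; rewrite FC // mulrA.
under [in RHS]eq_bigr do rewrite mulr_suml.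
by rewrite mulrA ss1 mul1r; ring.
Qed.

End EdgeSums.

Section Packing.
Variables (R : realType) (n : nat) (G : emb_graph n) (p : config R n).
Hypothesis adjC : symmetric (adj G).

Definition flex_defect (q : config R n) i j :=
  (px p i - px p j) * (px q i - px q j) + (py p i - py p j) * (py q i - py q j)
  - (pr p i + pr p j) * (pr q i + pr q j).

Definition stress_force_x (w : 'I_n -> 'I_n -> R) i :=
  \sum_(j | adj G i j) w i j * (px p i - px p j).

Definition stress_force_y (w : 'I_n -> 'I_n -> R) i :=
  \sum_(j | adj G i j) w i j * (py p i - py p j).

Lemma inf_flexP q : inf_flex G p q <-> forall i j, adj G i j -> flex_defect q i j = 0.
Proof.
split=> fq i j ij; first by rewrite /flex_defect fq // subrr.
by apply/eqP; rewrite -subr_eq0; apply/eqP/fq.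
Qed.

Lemma stress_pairing w q : is_stress G w ->
  \sum_i \sum_(j | adj G i j) w i j * flex_defect q i j
  = 2 * \sum_i (stress_force_x w i * px q i + stress_force_y w i * py q i
                - radial_force G p w i * pr q i).
Proof.
move=> wS.
have Ex : \sum_i \sum_(j | adj G i j) w i j * (px p i - px p j) * (px q i + -1 * px q j)
    = 2 * \sum_i stress_force_x w i * px q i.
  by apply: (sum_adj_double adjC) => [|i j ij]; [ring | rewrite (wS _ _ ij); ring].
have Ey : \sum_i \sum_(j | adj G i j) w i j * (py p i - py p j) * (py q i + -1 * py q j)
    = 2 * \sum_i stress_force_y w i * py q i.
  by apply: (sum_adj_double adjC) => [|i j ij]; [ring | rewrite (wS _ _ ij); ring].
have Er : \sum_i \sum_(j | adj G i j) - (w i j * (pr p i + pr p j)) * (pr q i + 1 * pr q j)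
    = 2 * \sum_i (\sum_(j | adj G i j) - (w i j * (pr p i + pr p j))) * pr q i.
  by apply: (sum_adj_double adjC) => [|i j ij]; [ring | rewrite (wS _ _ ij); ring].
rewrite [in RHS](eq_bigr (fun i => stress_force_x w i * px q i + stress_force_y w i * py q i
  + (\sum_(j | adj G i j) - (w i j * (pr p i + pr p j))) * pr q i)); last first.
  by move=> i _; rewrite sumrN /radial_force; ring.
rewrite !big_split /= !mulrDr -Ex -Ey -Er -!big_split; apply: eq_bigr => i _.
by rewrite -!big_split; apply: eq_bigr => j _ /=; rewrite /flex_defect; ring.
Qed.

Definition proper_radius (k : vkind) (r : R) : Prop :=
  match k with VPlus => 0 <= r | VMinus => r <= 0 | VEq => r = 0 | VFree => True end.

Definition stress_sign (k : vkind) (f : R) : Prop :=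
  match k with VPlus => f < 0 | VMinus => 0 < f | VEq => True | VFree => f = 0 end.

Lemma stress_sign_mul_le0 k f r : stress_sign k f -> proper_radius k r -> f * r <= 0.
Proof.
case: k => /= [f_lt0 r_ge0 | f_gt0 r_le0 | _ -> | -> _].
- exact: mulr_le0_ge0 (ltW f_lt0) r_ge0.
- exact: mulr_ge0_le0 (ltW f_gt0) r_le0.
- by rewrite mulr0.
- by rewrite mul0r.
Qed.

Lemma stress_sign_mul_eq0 k f r : stress_sign k f -> proper_radius k r ->
  f * r = 0 -> k <> VFree -> r = 0.
Proof.
case: k => //= [f_lt0 | f_gt0] _ /eqP; rewrite mulf_eq0 => /orP[/eqP f0|/eqP //].
- by move: f_lt0; rewrite f0 ltxx.
- by move: f_gt0; rewrite f0 ltxx.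
Qed.

Lemma equilibrium_radial_pairing w q : equilibrium_stress G p w -> inf_flex G p q ->
  \sum_i radial_force G p w i * pr q i = 0.
Proof.
move=> [wS wE] /inf_flexP fq.
have := stress_pairing q wS.
rewrite big1 => [|i _]; last by rewrite big1 // => j ij; rewrite fq // mulr0.
under eq_bigr do rewrite /stress_force_x /stress_force_y (proj1 (wE _)) (proj2 (wE _)).
rewrite (eq_bigr (fun i => - (radial_force G p w i * pr q i))) => [|i _]; last first.
  by rewrite !mul0r !add0r.
by rewrite sumrN mulrN => /esym/eqP; rewrite oppr_eq0 mulf_eq0 pnatr_eq0 => /eqP.
Qed.

Lemma stressed_flex_fixed_radius kind w q :
  equilibrium_stress G p w -> (forall i, stress_sign (kind i) (radial_force G p w i)) ->
  inf_flex G p q -> proper_flex kind q -> forall k, kind k <> VFree -> pr q k = 0.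
Proof.
move=> wE wsign fq qproper k.
have ge0 i (_ : true) : 0 <= - (radial_force G p w i * pr q i).
  by rewrite oppr_ge0 (stress_sign_mul_le0 (wsign i) (qproper i)).
apply: stress_sign_mul_eq0 (wsign k) (qproper k) _; apply/eqP; rewrite -oppr_eq0.
by rewrite (psumr_eq0P ge0) // sumrN (equilibrium_radial_pairing wE fq) oppr0.
Qed.

(* Flexes are handled as [3 x n] matrices with rows [x'], [y'], [r'], a vector
   space in which Farkas' lemma applies. *)
Definition mx_config (Q : 'M[R]_(3, n)) : config R n := Config (Q 0) (Q 1) (Q 2).

Definition radius_sign (k : vkind) : R :=
  match k with VPlus => 1 | VMinus => -1 | _ => 0 end.

Definition flex_constraint kind (e : ('I_n * 'I_n) + 'I_n) (Q : 'M[R]_(3, n)) : R :=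
  match e with
  | inl (i, j) => if adj G i j then flex_defect (mx_config Q) i j else 0
  | inr k => (if kind k is VEq then 1 else 0) * Q 2 k
  end.

Definition radius_constraint kind k (Q : 'M[R]_(3, n)) : R := radius_sign (kind k) * Q 2 k.

Lemma scalar_flex_constraint kind e : scalar (flex_constraint kind e).
Proof.
by case: e => [[i j]|k] t Q Q' /=; [case: (adj G i j) |]; rewrite /flex_defect /= ?mxE; ring.
Qed.

Lemma scalar_radius_constraint kind k : scalar (radius_constraint kind k).
Proof. by move=> t Q Q'; rewrite /radius_constraint !mxE; ring. Qed.

Lemma rigid_radius_constraint kind : inf_rigid G kind p ->
  forall Q, (forall e, flex_constraint kind e Q = 0) ->
  (forall k, 0 <= radius_constraint kind k Q) -> forall k, radius_constraint kind k Q = 0.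
Proof.
move=> rigid Q flexQ radQ k.
have fQ : inf_flex G p (mx_config Q).
  by apply/inf_flexP => i j ij; have := flexQ (inl (i, j)); rewrite /= ij.
have pQ : proper_flex kind (mx_config Q).
  move=> i; have := flexQ (inr i); have := radQ i; rewrite /radius_constraint /=.
  by case: (kind i) => /=; lra.
have [th [ta [tb [_ trivQ]]]] := rigid _ fQ pQ.
by have [_ _ /= rk] := trivQ k; rewrite /radius_constraint rk mulr0.
Qed.

(* The minus sign makes the radial forces come out with the signs required by
   [stress_sign]. *)
Definition pair_stress (mu : ('I_n * 'I_n) + 'I_n -> R) i j : R :=
  - (mu (inl (i, j)) + mu (inl (j, i))).

Lemma flex_constraint_combination kind mu Q (w := pair_stress mu) :
  \sum_e mu e * flex_constraint kind e Q
  = \sum_i (- stress_force_x w i * Q 0 i - stress_force_y w i * Q 1 i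
            + (radial_force G p w i + (if kind i is VEq then mu (inr i) else 0)) * Q 2 i).
Proof.
set d := flex_defect (mx_config Q).
have wS : is_stress G w by move=> i j _; rewrite /w /pair_stress addrC.
have edges : \sum_(ij : 'I_n * 'I_n) mu (inl ij) * flex_constraint kind (inl ij) Q
    = \sum_i \sum_(j | adj G i j) mu (inl (i, j)) * d i j.
  under [RHS]eq_bigr do rewrite big_mkcond; rewrite [RHS]pair_bigA.
  by apply: eq_bigr => -[i j] _ /=; case: (adj G i j); rewrite ?mulr0.
have dC : \sum_i \sum_(j | adj G i j) mu (inl (j, i)) * d i j
    = \sum_i \sum_(j | adj G i j) mu (inl (i, j)) * d i j.
  rewrite (sum_adj_swap adjC); apply: eq_bigr => i _; apply: eq_bigr => j _.
  by rewrite /d /flex_defect; ring.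
have := stress_pairing (mx_config Q) wS.
have -> : \sum_i \sum_(j | adj G i j) w i j * d i j
    = - (\sum_i \sum_(j | adj G i j) mu (inl (i, j)) * d i j
         + \sum_i \sum_(j | adj G i j) mu (inl (j, i)) * d i j).
  rewrite -big_split -sumrN; apply: eq_bigr => i _.
  by rewrite -big_split -sumrN; apply: eq_bigr => j _; rewrite /w /pair_stress /=; ring.
rewrite dC -edges => edgesE.
set S := \sum_i (_ + _ - _) in edgesE.
have -> : \sum_i (- stress_force_x w i * Q 0 i - stress_force_y w i * Q 1 i
    + (radial_force G p w i + (if kind i is VEq then mu (inr i) else 0)) * Q 2 i)
    = - S + \sum_k mu (inr k) * flex_constraint kind (inr k) Q.
  by rewrite -sumrN -big_split; apply: eq_bigr => i _ /=; case: (kind i); ring.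
by rewrite big_sumType; congr (_ + _); lra.
Qed.

Lemma rigid_stress kind : inf_rigid G kind p ->
  exists w, equilibrium_stress G p w /\ forall i, stress_sign (kind i) (radial_force G p w i).
Proof.
move=> rigid.
have [mu [l l_gt0 muE]] := farkas_strict (scalar_flex_constraint kind)
  (scalar_radius_constraint kind) (rigid_radius_constraint rigid).
set w := pair_stress mu.
have form0 (Q : 'M[R]_(3, n)) :
    \sum_i (- stress_force_x w i * Q 0 i + - stress_force_y w i * Q 1 i
      + (radial_force G p w i + (if kind i is VEq then mu (inr i) else 0)
         + l i * radius_sign (kind i)) * Q 2 i) = 0.
  rewrite -[RHS](muE Q) flex_constraint_combination -big_split; apply: eq_bigr => i _ /=.
  by rewrite /radius_constraint; ring.
have coef0 := mx3_form_eq0 form0.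
exists w; split.
  split=> [i j _|i]; first by rewrite /w /pair_stress addrC.
  have [fx0 fy0 _] := coef0 i.
  by split; apply/eqP; rewrite -oppr_eq0; apply/eqP; [exact: fx0 | exact: fy0].
move=> i; have [_ _] := coef0 i; have := l_gt0 i.
by rewrite /stress_sign; case: (kind i) => /=; lra.
Qed.

End Packing.

Theorem mainTheorem1 (R : realType) (n : nat) (G : emb_graph n) (p : config R n)
    (kind : 'I_n -> vkind) :
  planar_emb_graph G -> is_packing G p ->
  (inf_rigid G kind p <->
   ((forall q : config R n, inf_flex G p q ->
       (forall k, kind k <> VFree -> pr q k = 0) -> trivial_flex p q) /\
    (exists w : 'I_n -> 'I_n -> R, equilibrium_stress G p w /\
       forall i, match kind i return Prop with
                 | VMinus => 0 < radial_force G p w i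
                 | VPlus => radial_force G p w i < 0
                 | VFree => radial_force G p w i = 0
                 | VEq => True
                 end))).
Proof.
move=> [[adjC _] _] _.
split=> [rigid | [fixed [w [wE wsign]]] q fq qproper].
  split; last exact (rigid_stress adjC rigid).
  move=> q fq fixedq; apply: rigid fq _ => i.
  by case ki: (kind i) => //=; rewrite fixedq ?ki.
exact/fixed/(stressed_flex_fixed_radius adjC wE wsign fq qproper).
Qed.
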